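(* Every skewly representable function $f:\mathbb{N}^k\to\mathbb{N}$ with finite range is strictly representable.
   Context: We work in the simply typed $\lambda$-calculus (type assignment to untyped $\lambda$-terms) with a single base type $o$, with $\beta\eta$-conversion as equality. For a type $\tau$, $\omega_\tau=(\tau\to\tau)\to\tau\to\tau$. The Church numeral of $n$ is $\rho(n)=\lambda f x.f^{n}x$; every type assignable to all Church numerals is of the form $\omega_\tau$. A function $f:\mathbb{N}^k\to\mathbb{N}$ is skewly representable if there exist a term $E$ and types $\alpha_1,\dots,\alpha_k,\beta$ (each a type of Church numerals) with $\vdash E:\alpha_1\to\cdots\to\alpha_k\to\beta$ such that $E\,\rho(n_1)\cdots\rho(n_k)=_{\beta\eta}\rho(f(n_1,\dots,n_k))$ for all $n_1,\dots,n_k$, where $\rho(n_i)$ is typed with $\alpha_i$. It is strictly representable if this holds with $\alpha_1=\cdots=\alpha_k=\beta=\omega_\tau$ for some type $\tau$. *)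

From mathcomp Require Import all_boot.
From Stdlib Require Import Relation_Operators.
Set Implicit Arguments. Unset Strict Implicit. Unset Printing Implicit Defensive.

Inductive ty : Type := TO : ty | Arr : ty -> ty -> ty.

Definition omega (t : ty) : ty := Arr (Arr t t) (Arr t t).

Inductive tm : Type := Var : nat -> tm | App : tm -> tm -> tm | Lam : tm -> tm.

Fixpoint lift (d c : nat) (t : tm) : tm :=
  match t with
  | Var n => if n < c then Var n else Var (n + d)
  | App u v => App (lift d c u) (lift d c v)
  | Lam u => Lam (lift d c.+1 u)
  end.

(* subst j s t : replace index j by s in t, decrementing indices above j *)
Fixpoint subst (j : nat) (s : tm) (t : tm) : tm :=
  match t with
  | Var n => if n == j then s else if j < n then Var n.-1 else Var n
  | App u v => App (subst j s u) (subst j s v)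
  | Lam u => Lam (subst j.+1 (lift 1 0 s) u)
  end.

Inductive step : tm -> tm -> Prop :=
  | step_beta t s : step (App (Lam t) s) (subst 0 s t)
  | step_eta u : step (Lam (App (lift 1 0 u) (Var 0))) u
  | step_appl u u' v : step u u' -> step (App u v) (App u' v)
  | step_appr u v v' : step v v' -> step (App u v) (App u v')
  | step_lam u u' : step u u' -> step (Lam u) (Lam u').

Definition betaeta : tm -> tm -> Prop := clos_refl_sym_trans tm step.

(* Curry-style type assignment; contexts are lists (index 0 = innermost). *)
Fixpoint lookup (G : seq ty) (n : nat) : option ty :=
  match G, n with
  | [::], _ => None
  | A :: _, 0 => Some A
  | _ :: G', n'.+1 => lookup G' n'
  end.

Inductive has_type : seq ty -> tm -> ty -> Prop :=
  | ht_var G n A : lookup G n = Some A -> has_type G (Var n) A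
  | ht_app G u v A B : has_type G u (Arr A B) -> has_type G v A -> has_type G (App u v) B
  | ht_lam G u A B : has_type (A :: G) u B -> has_type G (Lam u) (Arr A B).

Definition church (n : nat) : tm := Lam (Lam (iter n (App (Var 1)) (Var 0))).

Definition numeral_type (A : ty) : Prop := forall n, has_type [::] (church n) A.

Definition arrows (As : seq ty) (B : ty) : ty := foldr Arr B As.

Definition apps (E : tm) (ts : seq tm) : tm := foldl App E ts.

Definition skewly_representable (k : nat) (f : k.-tuple nat -> nat) : Prop :=
  exists (E : tm) (al : k.-tuple ty) (b : ty),
    (forall i : 'I_k, numeral_type (tnth al i)) /\ numeral_type b /\
    has_type [::] E (arrows al b) /\
    forall x : k.-tuple nat, betaeta (apps E (map church x)) (church (f x)).

Definition strictly_representable (k : nat) (f : k.-tuple nat -> nat) : Prop :=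
  exists (E : tm) (t : ty),
    has_type [::] E (arrows (nseq k (omega t)) (omega t)) /\
    forall x : k.-tuple nat, betaeta (apps E (map church x)) (church (f x)).

Definition finite_range (k : nat) (f : k.-tuple nat -> nat) : Prop :=
  exists s : seq nat, forall x : k.-tuple nat, f x \in s.

(* Let E represent f at argument types omega T_1, ..., omega T_k and result type omega sigma,
   and let every value of f be at most n.  Substituting the selector type r = o^(n+1) -> o
   for the base type in the typing of E, the values of f become distinguishable as the n+1
   projections of type r.  Take tau = (omega T_1[r/o] -> ... -> omega T_k[r/o] -> r) -> r,
   the type of k-tuples of numerals in continuation-passing style.  A numeral c : omega tau,
   iterated on the tuple successor from the zero tuple, yields the tuple (c, ..., c), whose
   i-th component is c at type omega T_i[r/o].  Feeding these components to E, and turning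
   the numeral it returns into a selector, gives a term of type r; finally a selector s is
   turned back into a numeral of type omega tau by applying it to x, f x, ..., f^n x. *)

From mathcomp Require Import all_boot zify.
From Stdlib Require Import Relation_Operators.
From Stdlib Require List.

Set Implicit Arguments. Unset Strict Implicit. Unset Printing Implicit Defensive.

Fixpoint closed_at (n : nat) (t : tm) : bool :=
  match t with
  | Var m => m < n
  | App u v => closed_at n u && closed_at n v
  | Lam u => closed_at n.+1 u
  end.

Notation closed := (closed_at 0).

Lemma closed_at_le m n t : m <= n -> closed_at m t -> closed_at n t.
Proof.
elim: t m n => [i|u IHu v IHv|u IHu] m n /= le_mn.
- by move=> ?; lia.
- by case/andP=> /(IHu _ _ le_mn) -> /(IHv _ _ le_mn).
- exact: IHu.
Qed.

Lemma closedW n t : closed t -> closed_at n t.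
Proof. exact: closed_at_le. Qed.

Lemma lift_closed_at n d c t : n <= c -> closed_at n t -> lift d c t = t.
Proof.
elim: t n c => [i|u IHu v IHv|u IHu] n c /= le_nc.
- by move=> ?; have -> : i < c by lia.
- by case/andP=> /(IHu _ _ le_nc) -> /(IHv _ _ le_nc) ->.
- by move/(IHu _ c.+1) ->.
Qed.

Lemma subst_closed_at n j s t : n <= j -> closed_at n t -> subst j s t = t.
Proof.
elim: t n j s => [i|u IHu v IHv|u IHu] n j s /= le_nj.
- move=> ?; have -> : (i == j) = false by apply/eqP; lia.
  by have -> : (j < i) = false by lia.
- by case/andP=> /(IHu _ _ s le_nj) -> /(IHv _ _ s le_nj) ->.
- by move/(IHu _ j.+1) ->.
Qed.

Lemma lift_closed d c t : closed t -> lift d c t = t.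
Proof. exact: lift_closed_at. Qed.

Lemma subst_closed j s t : closed t -> subst j s t = t.
Proof. exact: subst_closed_at. Qed.

Lemma lift0 c t : lift 0 c t = t.
Proof.
elim: t c => [i|u IHu v IHv|u IHu] c /=; last by rewrite IHu.
- by rewrite addn0 if_same.
- by rewrite IHu IHv.
Qed.

Lemma lift_lift d d' c c' t : c <= c' <= c + d ->
  lift d' c' (lift d c t) = lift (d + d') c t.
Proof.
elim: t c c' => [i|u IHu v IHv|u IHu] c c' /= /andP[le_cc' le_c'cd].
- case: ifP => /= lt_ic; first by have -> : i < c' by lia.
  have -> : (i + d < c') = false by lia.
  by rewrite addnA.
- by rewrite IHu ?IHv // le_cc'.
- by rewrite IHu // ltnS le_cc' addSn ltnS.
Qed.

Lemma subst_lift j s d c t : c <= j <= c + d ->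
  subst j s (lift d.+1 c t) = lift d c t.
Proof.
elim: t s c j => [i|u IHu v IHv|u IHu] s c j /= /andP[le_cj le_jcd].
- case: ifP => /= lt_ic.
  + have -> : (i == j) = false by apply/eqP; lia.
    by have -> : (j < i) = false by lia.
  + have -> : (i + d.+1 == j) = false by apply/eqP; lia.
    have -> : j < i + d.+1 by lia.
    by rewrite addnS.
- by rewrite IHu ?IHv // le_cj.
- by rewrite IHu // ltnS le_cj addSn ltnS.
Qed.

Lemma lift_apps d c h us : lift d c (apps h us) = apps (lift d c h) (map (lift d c) us).
Proof. by elim: us h => //= u us IH h; rewrite IH. Qed.

Lemma subst_apps j s h us : subst j s (apps h us) = apps (subst j s h) (map (subst j s) us).
Proof. by elim: us h => //= u us IH h; rewrite IH. Qed.

Lemma lift_iter d c n a b :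
  lift d c (iter n (App a) b) = iter n (App (lift d c a)) (lift d c b).
Proof. by elim: n => //= n ->. Qed.

Lemma subst_iter j s n a b :
  subst j s (iter n (App a) b) = iter n (App (subst j s a)) (subst j s b).
Proof. by elim: n => //= n ->. Qed.

Lemma map_subst_closed j s us : all closed us -> map (subst j s) us = us.
Proof. by elim: us => //= u us IH /andP[/(subst_closed j s) -> /IH ->]. Qed.

Lemma closed_apps n h us : closed_at n h -> all (closed_at n) us -> closed_at n (apps h us).
Proof.
elim: us h => //= u us IH h closed_h /andP[closed_u closed_us].
by apply: IH => //=; rewrite closed_h.
Qed.

Lemma closed_iter n m a b : closed_at n a -> closed_at n b -> closed_at n (iter m (App a) b).
Proof. by move=> closed_a closed_b; elim: m => //= m ->; rewrite closed_a. Qed.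

Lemma apps_rcons h us u : apps h (rcons us u) = App (apps h us) u.
Proof. by rewrite /apps foldl_rcons. Qed.

Lemma closed_church n : closed (church n).
Proof. exact: closed_iter. Qed.

Lemma all_closed_church ns : all closed (map church ns).
Proof. by elim: ns => // n ns IH; apply/andP; split; [apply: closed_church|]. Qed.

Arguments apps : simpl never.

Lemma apps_cons h u us : apps h (u :: us) = apps (App h u) us.
Proof. by []. Qed.

Lemma betaeta_refl t : betaeta t t. Proof. exact: rst_refl. Qed.
Lemma betaeta_sym t u : betaeta t u -> betaeta u t. Proof. exact: rst_sym. Qed.
Lemma betaeta_trans t u v : betaeta t u -> betaeta u v -> betaeta t v.
Proof. exact: rst_trans. Qed.

Lemma betaeta_beta t s : betaeta (App (Lam t) s) (subst 0 s t).
Proof. exact/rst_step/step_beta. Qed.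

Lemma betaeta_eta u : betaeta (Lam (App (lift 1 0 u) (Var 0))) u.
Proof. exact/rst_step/step_eta. Qed.

Lemma betaeta_congr (F : tm -> tm) : (forall u u', step u u' -> step (F u) (F u')) ->
  forall u u', betaeta u u' -> betaeta (F u) (F u').
Proof.
move=> stepF u u'; elim=> [x y xy|x|x y _|x y z _ IH1 _ IH2].
- exact/rst_step/stepF.
- exact: betaeta_refl.
- exact: betaeta_sym.
- exact: betaeta_trans IH2.
Qed.

Lemma betaeta_appl u u' v : betaeta u u' -> betaeta (App u v) (App u' v).
Proof. exact: (betaeta_congr (fun _ _ => step_appl v)). Qed.

Lemma betaeta_appr u v v' : betaeta v v' -> betaeta (App u v) (App u v').
Proof. exact: (betaeta_congr (@step_appr u)). Qed.

Lemma betaeta_lam u u' : betaeta u u' -> betaeta (Lam u) (Lam u').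
Proof. exact: (betaeta_congr step_lam). Qed.

Lemma betaeta_apps u u' us : betaeta u u' -> betaeta (apps u us) (apps u' us).
Proof. by elim: us u u' => // a us IH u u' /(betaeta_appl a) /IH. Qed.

Lemma betaeta_beta_apps b a us R :
  betaeta (apps (subst 0 a b) us) R -> betaeta (apps (Lam b) (a :: us)) R.
Proof. by rewrite apps_cons; apply: betaeta_trans; apply/betaeta_apps/betaeta_beta. Qed.

Lemma lift_lift0 d d' t : lift d' 0 (lift d 0 t) = lift (d + d') 0 t.
Proof. exact: lift_lift. Qed.

Lemma subst_lift0 j s d t : j <= d -> subst j s (lift d.+1 0 t) = lift d 0 t.
Proof. by move=> le_jd; rewrite subst_lift. Qed.

Create HintDb closed.
Hint Resolve closed_church all_closed_church : closed.

Ltac solve_closed := lazymatch goal with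
  | |- is_true (closed_at _ (Var _)) => by []
  | |- is_true (closed_at ?n (App ?u ?v)) =>
      change (is_true (closed_at n u && closed_at n v)); apply/andP; split; solve_closed
  | |- is_true (closed_at ?n (Lam ?u)) => change (is_true (closed_at n.+1 u)); solve_closed
  | |- _ => apply: closedW; auto with closed
  end.

Ltac drop_closed_lifts := repeat match goal with
  | |- context [lift ?d ?c ?t] => rewrite (@lift_closed d c t); last by auto with closed
  | |- context [subst ?j ?s ?t] => rewrite (@subst_closed j s t); last by auto with closed
  end.

Ltac beta := apply: betaeta_beta_apps; rewrite /=; drop_closed_lifts;
  rewrite ?lift_lift0 ?subst_lift0 ?lift0 //.

Lemma church_red n f x : betaeta (apps (church n) [:: f; x]) (iter n (App f) x).
Proof.
rewrite /church; beta; beta.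
by rewrite subst_iter /= subst_iter /= subst_lift0 // lift0; apply: betaeta_refl.
Qed.

Lemma churchE n : church n = Lam (Lam (iter n (App (Var 1)) (Var 0))).
Proof. by []. Qed.

Section Reduction.

(* Each combinator is made opaque once its reduction rule is proved, so that [simpl] keeps
   closed combinators folded when it pushes substitutions through a beta-redex. *)
Local Opaque church.

Definition succ_tm := Lam (Lam (Lam (App (Var 1) (App (App (Var 2) (Var 1)) (Var 0))))).

Lemma closed_succ : closed succ_tm. Proof. by []. Qed.
Hint Resolve closed_succ : closed.

Lemma succ_church n : betaeta (App succ_tm (church n)) (church n.+1).
Proof.
rewrite -[App _ _]/(apps succ_tm [:: church n]) /succ_tm; beta.
rewrite [church n.+1]churchE /apps /=; apply/betaeta_lam/betaeta_lam/betaeta_appr.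
exact: (church_red n (Var 1) (Var 0)).
Qed.

Local Opaque succ_tm.

Fixpoint map_succ j := match j with
  | 0 => Lam (Var 0)
  | j.+1 => Lam (Lam (App (map_succ j) (App (Var 1) (App succ_tm (Var 0)))))
  end.

Lemma closed_map_succ j : closed (map_succ j).
Proof. by elim: j => // j IH; rewrite [map_succ _]/=; solve_closed. Qed.
Hint Resolve closed_map_succ : closed.

Lemma map_succ_red j u cs : size cs = j ->
  betaeta (apps (map_succ j) (u :: cs)) (apps u (map (App succ_tm) cs)).
Proof.
elim: cs j u => [|c cs IH] [|j] u //= => [_|[size_cs]].
  by beta; apply: betaeta_refl.
by beta; beta; rewrite apps_cons -apps_cons; apply: IH.
Qed.

Fixpoint discard m := match m with
  | 0 => Lam (Var 0)
  | m.+1 => Lam (Lam (App (discard m) (Var 1)))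
  end.

Lemma closed_discard m : closed (discard m).
Proof. by elim: m => // m IH; rewrite [discard _]/=; solve_closed. Qed.
Hint Resolve closed_discard : closed.

Lemma discard_red m u cs : size cs = m -> betaeta (apps (discard m) (u :: cs)) u.
Proof.
elim: cs m u => [|c cs IH] [|m] u //= => [_|[size_cs]].
  by beta; apply: betaeta_refl.
by beta; beta; apply: IH.
Qed.

Fixpoint proj n i := match i with
  | 0 => Lam (Lam (App (discard n.-1) (App (Var 1) (Var 0))))
  | i.+1 => Lam (Lam (App (proj n.-1 i) (Var 1)))
  end.

Lemma closed_proj n i : closed (proj n i).
Proof. by elim: i n => [|i IH] n; rewrite [proj _ _]/=; solve_closed. Qed.
Hint Resolve closed_proj : closed.

Lemma proj_red n i K cs : i < n -> size cs = n ->
  betaeta (apps (proj n i) (K :: cs)) (App K (nth (Var 0) cs i)).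
Proof.
elim: i n K cs => [|i IH] n K [|c cs] lt_in size_cs; subst n => //=.
- by beta; beta; apply: (discard_red (App K c)).
- by beta; beta; rewrite -apps_cons; apply: IH.
Qed.

Lemma betaeta_apps_nseq h k u u' :
  betaeta u u' -> betaeta (apps h (nseq k u)) (apps h (nseq k u')).
Proof.
move=> uu'; elim: k h => [|k IH] h; first exact: betaeta_refl.
by rewrite /= !apps_cons; apply: betaeta_trans (IH _) _; apply/betaeta_apps/betaeta_appr.
Qed.

Definition zero_tuple k := Lam (apps (Var 0) (nseq k (church 0))).

Lemma closed_zero_tuple k : closed (zero_tuple k).
Proof.
rewrite /zero_tuple /=; apply: closed_apps => //.
by rewrite all_nseq (closedW 1 (closed_church 0)) orbT.
Qed.
Hint Resolve closed_zero_tuple : closed.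

Lemma zero_tuple_red k g : betaeta (App (zero_tuple k) g) (apps g (nseq k (church 0))).
Proof.
apply: betaeta_trans (betaeta_beta _ _) _.
rewrite subst_apps map_subst_closed /=; last by rewrite all_nseq closed_church orbT.
exact: betaeta_refl.
Qed.

Local Opaque zero_tuple.

Definition tuple_succ k := Lam (Lam (App (Var 1) (App (map_succ k) (Var 0)))).

Lemma closed_tuple_succ k : closed (tuple_succ k).
Proof. rewrite /tuple_succ; solve_closed. Qed.
Hint Resolve closed_tuple_succ : closed.

Lemma tuple_succ_red k t g : closed t ->
  betaeta (App (App (tuple_succ k) t) g) (App t (App (map_succ k) g)).
Proof.
move=> closed_t; rewrite -[App (App _ _) _]/(apps (tuple_succ k) [:: t; g]).
by beta; beta; apply: betaeta_refl.
Qed.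

Local Opaque tuple_succ.

Lemma iter_tuple_succ_red k n g :
  betaeta (App (iter n (App (tuple_succ k)) (zero_tuple k)) g) (apps g (nseq k (church n))).
Proof.
elim: n g => [|n IH] g /=; first exact: zero_tuple_red.
have closed_tuple : closed (iter n (App (tuple_succ k)) (zero_tuple k)).
  by apply: closed_iter; auto with closed.
apply: betaeta_trans (tuple_succ_red _ _ closed_tuple) _.
apply: betaeta_trans (IH _) _; rewrite -apps_cons.
apply: betaeta_trans (map_succ_red g (size_nseq _ _)) _; rewrite map_nseq.
exact/betaeta_apps_nseq/succ_church.
Qed.

(* All components of the iterated tuple are the same numeral; projecting the i-th one is what
   retypes it from omega (cps_ty Ts R) to omega (nth TO Ts i). *)
Definition coord k i :=
  Lam (Lam (App (App (App (Var 1) (tuple_succ k)) (zero_tuple k)) (App (proj k i) (Var 0)))).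

Lemma closed_coord k i : closed (coord k i).
Proof. rewrite /coord; solve_closed. Qed.
Hint Resolve closed_coord : closed.

Lemma coord_red k i n K : i < k ->
  betaeta (apps (coord k i) [:: church n; K]) (App K (church n)).
Proof.
move=> lt_ik; rewrite /coord; beta; beta.
rewrite /apps /=.
apply: betaeta_trans (betaeta_appl _ (church_red _ _ _)) _.
apply: betaeta_trans (iter_tuple_succ_red _ _ _) _.
rewrite -apps_cons; apply: betaeta_trans (proj_red K lt_ik (size_nseq _ _)) _.
by rewrite nth_nseq lt_ik; apply: betaeta_refl.
Qed.

Local Opaque coord.

Fixpoint cps_bind m := match m with
  | 0 => Lam (Lam (App (Var 0) (Var 1)))
  | m.+1 =>
      Lam (Lam (Lam (App (App (cps_bind m) (Lam (App (App (Var 3) (Var 0)) (Var 1)))) (Var 1))))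
  end.

Lemma closed_cps_bind m : closed (cps_bind m).
Proof. by elim: m => // m IH; rewrite [cps_bind _]/=; solve_closed. Qed.
Hint Resolve closed_cps_bind : closed.

Lemma cps_bind_red h v xs : closed h -> closed v -> all closed xs ->
  betaeta (apps (cps_bind (size xs)) [:: h, v & xs]) (App v (Lam (apps (App h (Var 0)) xs))).
Proof.
elim: xs h => [|x xs IH] h closed_h closed_v /=.
  move=> _; beta; beta; rewrite /apps /=; apply/betaeta_appr/betaeta_sym.
  by have := betaeta_eta h; rewrite lift_closed.
case/andP=> closed_x closed_xs; beta; beta; beta.
have closed_hx : closed (Lam (App (App h (Var 0)) x)) by solve_closed.
apply: betaeta_trans (IH _ closed_hx closed_v closed_xs) _.
apply/betaeta_appr/betaeta_lam/betaeta_apps.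
apply: betaeta_trans (betaeta_beta _ _) _; rewrite /=; drop_closed_lifts; exact: betaeta_refl.
Qed.

Fixpoint postcompose m := match m with
  | 0 => Lam (Lam (App (Var 1) (Var 0)))
  | m.+1 => Lam (Lam (Lam (App (App (postcompose m) (Var 2)) (App (Var 1) (Var 0)))))
  end.

Lemma closed_postcompose m : closed (postcompose m).
Proof. by elim: m => // m IH; rewrite [postcompose _]/=; solve_closed. Qed.
Hint Resolve closed_postcompose : closed.

Lemma postcompose_red c h ys :
  betaeta (apps (postcompose (size ys)) [:: c, h & ys]) (App c (apps h ys)).
Proof.
elim: ys c h => [|y ys IH] c h /=; first by beta; beta; apply: betaeta_refl.
by beta; beta; beta; apply: IH.
Qed.

Fixpoint rotate n := match n with
  | 0 => Lam (Lam (App (Var 1) (Var 0)))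
  | n.+1 => Lam (Lam (Lam (App (App (rotate n) (App (Var 2) (Var 0))) (Var 1))))
  end.

Lemma closed_rotate n : closed (rotate n).
Proof. by elim: n => // n IH; rewrite [rotate _]/=; solve_closed. Qed.
Hint Resolve closed_rotate : closed.

Lemma rotate_red q a us : betaeta (apps (rotate (size us)) [:: q, a & us]) (App (apps q us) a).
Proof.
elim: us q a => [|u us IH] q a /=; first by beta; beta; apply: betaeta_refl.
by beta; beta; beta; apply: IH.
Qed.

Lemma selector_red n m us : m <= n -> size us = n.+1 ->
  betaeta (apps (iter m (App (rotate n)) (discard n)) us) (nth (Var 0) us m).
Proof.
elim: m us => [|m IH] [|u us] //= le_mn [size_us].
  exact: discard_red.
rewrite -apps_cons -{1}size_us; apply: betaeta_trans (rotate_red _ _ _) _.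
rewrite -apps_rcons; apply: betaeta_trans (IH _ (ltnW le_mn) _) _.
  by rewrite size_rcons size_us.
by rewrite nth_rcons size_us le_mn; apply: betaeta_refl.
Qed.

Lemma iter_postcompose_red c z ys m :
  betaeta (apps (iter m (App (App (postcompose (size ys)) c)) (App (discard (size ys)) z)) ys)
          (iter m (App c) z).
Proof.
elim: m => [|m IH] /=; first exact: discard_red.
rewrite -[apps (App _ _) _]/(apps (postcompose (size ys)) [:: c, _ & ys]).
exact: betaeta_trans (postcompose_red _ _ _) (betaeta_appr _ IH).
Qed.

(* The numeral is iterated at type sigma[r/o] = A_1 -> ... -> A_j -> r, on [rotate n] lifted
   pointwise; the closed arguments [ds] of types A_i then extract the selector. *)
Definition numeral_to_sel n ds := Lam (apps (App (App (Var 0)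
  (App (postcompose (size ds)) (rotate n))) (App (discard (size ds)) (discard n))) ds).

Lemma closed_numeral_to_sel n ds : all closed ds -> closed (numeral_to_sel n ds).
Proof.
move=> closed_ds; apply: closed_apps; first by solve_closed.
by apply: sub_all closed_ds => t; apply: closedW.
Qed.

Lemma numeral_to_sel_red n ds m : all closed ds ->
  betaeta (App (numeral_to_sel n ds) (church m)) (iter m (App (rotate n)) (discard n)).
Proof.
move=> closed_ds; apply: betaeta_trans (betaeta_beta _ _) _.
rewrite subst_apps map_subst_closed //=; drop_closed_lifts.
exact: betaeta_trans (betaeta_apps _ (church_red _ _ _)) (iter_postcompose_red _ _ _ _).
Qed.

Local Opaque numeral_to_sel.

(* Retypes the numeral arguments through [coord], in continuation-passing style, before
   passing them to the function given as first argument; [s] post-processes the result. *)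
Fixpoint convert_args k s i n := match n with
  | 0 => s
  | n.+1 => Lam (Lam (App (App (cps_bind n)
      (Lam (App (convert_args k s i.+1 n) (App (Var 2) (Var 0))))) (App (coord k i) (Var 0))))
  end.

Lemma closed_convert_args k s i n : closed s -> closed (convert_args k s i n).
Proof.
by move=> closed_s; elim: n i => // n IH i; rewrite [convert_args _ _ _ _]/=; solve_closed.
Qed.
Hint Resolve closed_convert_args : closed.

Lemma convert_args_red k s i F ns : closed s -> closed F -> i + size ns = k ->
  betaeta (apps (convert_args k s i (size ns)) (F :: map church ns))
          (App s (apps F (map church ns))).
Proof.
elim: ns i F => [|m ns IH] i F closed_s closed_F /= size_ns; first exact: betaeta_refl.
beta; beta.
set h := Lam _; set v := App (coord k i) (church m).
have closed_h : closed h by rewrite /h; solve_closed.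
have closed_v : closed v by rewrite /v; solve_closed.
rewrite -!apps_cons -[in cps_bind _](size_map church ns).
apply: betaeta_trans (cps_bind_red closed_h closed_v (all_closed_church ns)) _.
apply: betaeta_trans (coord_red _ _ _) _; first by rewrite -size_ns addnS ltnS leq_addr.
apply: betaeta_trans (betaeta_beta _ _) _.
rewrite subst_apps map_subst_closed ?all_closed_church //=; drop_closed_lifts.
apply: betaeta_trans (betaeta_apps _ (betaeta_beta _ _)) _; rewrite /=; drop_closed_lifts.
rewrite -apps_cons; apply: IH => //; first by solve_closed.
by rewrite addSnnS.
Qed.

Definition lams n b := iter n Lam b.

Fixpoint bvars n := if n is n'.+1 then Var n' :: bvars n' else [::].

Lemma betaeta_lams n b b' : betaeta b b' -> betaeta (lams n b) (lams n b').
Proof. by move=> bb'; elim: n => //= n IH; apply: betaeta_lam. Qed.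

Lemma eta_lams n u : betaeta (lams n (apps (lift n 0 u) (bvars n))) u.
Proof.
elim: n u => [|n IH] u; first by rewrite lift0; apply: betaeta_refl.
have bvarsS : bvars n.+1 = rcons (map (lift 1 0) (bvars n)) (Var 0).
  by elim: (n) => //= i ->; rewrite addn1.
rewrite /lams iterSr -/(lams n _) bvarsS apps_rcons.
rewrite -[n.+1]addn1 -lift_lift0 -lift_apps.
exact: betaeta_trans (betaeta_lams _ (betaeta_eta _)) (IH _).
Qed.

Lemma subst_lams n j s b : closed s -> subst j s (lams n b) = lams n (subst (j + n) s b).
Proof.
move=> closed_s; elim: n j => [|n IH] j; first by rewrite addn0.
by rewrite /lams /= -/(lams n b) lift_closed // IH addSnnS.
Qed.

Definition iterate_at a j :=
  apps (App (iter j (App (Var (a + 2))) (Var (a + 1))) (Var a)) (bvars a).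

Lemma closed_bvars n m : n <= m -> all (closed_at m) (bvars n).
Proof. by elim: n => //= n IH le_nm; rewrite le_nm IH // ltnW. Qed.

Lemma closed_iterate_at a j : closed_at (a + 3) (iterate_at a j).
Proof.
apply: closed_apps; last by apply: closed_bvars; rewrite leq_addr.
by rewrite /= closed_iter //=; lia.
Qed.

(* [fun s f x g ys => s (x g ys) (f x g ys) ... (f^(a-1) x g ys)]: the selector picks one
   eta-expanded iterate [f^m x], which then eta-contracts to [church m]. *)
Definition sel_to_church a :=
  Lam (Lam (Lam (Lam (lams a (apps (Var (a + 3)) (mkseq (iterate_at a) a)))))).

Lemma sel_to_church_red a t : closed t ->
  betaeta (App (sel_to_church a) t) (Lam (Lam (Lam (lams a (apps t (mkseq (iterate_at a) a)))))).
Proof.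
move=> closed_t; apply: betaeta_trans (betaeta_beta _ _) _; rewrite /=; drop_closed_lifts.
rewrite subst_lams // subst_apps /= addnC eqxx.
rewrite -map_comp (eq_map (g := iterate_at a)); first exact: betaeta_refl.
by move=> j /=; apply: subst_closed_at (closed_iterate_at a j); rewrite addnC.
Qed.

Lemma iterate_at_church a m :
  betaeta (Lam (Lam (Lam (lams a (iterate_at a m))))) (church m).
Proof.
rewrite churchE; apply/betaeta_lam/betaeta_lam.
set y := iter m (App (Var 1)) (Var 0).
have -> : iterate_at a m = apps (lift a 0 (App (lift 1 0 y) (Var 0))) (bvars a).
  rewrite /iterate_at /= lift_lift0 /y !lift_iter /=.
  by congr (apps (App (iter _ (App (Var _)) (Var _)) _) _); lia.
exact: betaeta_trans (betaeta_lam (eta_lams _ _)) (betaeta_eta _).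
Qed.

Definition strict_term k n ds E :=
  App (App (postcompose k) (sel_to_church n.+1)) (App (convert_args k (numeral_to_sel n ds) 0 k) E).

Lemma strict_term_red k n ds E ns m : closed E -> all closed ds -> size ns = k -> m <= n ->
  betaeta (apps E (map church ns)) (church m) ->
  betaeta (apps (strict_term k n ds E) (map church ns)) (church m).
Proof.
move=> closed_E closed_ds <- le_mn E_ns.
have closed_sel := closed_numeral_to_sel n closed_ds.
rewrite /strict_term -[in postcompose _](size_map church ns).
apply: betaeta_trans (postcompose_red _ _ _) _.
have W_red := convert_args_red (i := 0) closed_sel closed_E (erefl (size ns)).
apply: betaeta_trans (betaeta_appr _ W_red) _.
apply: betaeta_trans (betaeta_appr _ (betaeta_appr _ E_ns)) _.
apply: betaeta_trans (sel_to_church_red _ _) _; first by solve_closed.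
apply: betaeta_trans _ (iterate_at_church n.+1 m).
do 3 apply: betaeta_lam; apply: betaeta_lams.
apply: betaeta_trans (betaeta_apps _ (numeral_to_sel_red _ _ closed_ds)) _.
apply: betaeta_trans (selector_red le_mn _) _; first by rewrite size_mkseq.
by rewrite nth_mkseq //; apply: betaeta_refl.
Qed.

End Reduction.

Lemma lookup_cat G D n A : lookup G n = Some A -> lookup (G ++ D) n = Some A.
Proof. by elim: G n => [|B G IH] [|n] //=; apply: IH. Qed.

Lemma has_type_weaken G D t A : has_type G t A -> has_type (G ++ D) t A.
Proof.
elim=> {G t A} [G n A lookup_n|G u v A B _ IHu _ IHv|G u A B _ IH].
- exact/ht_var/lookup_cat.
- exact: ht_app IHu IHv.
- exact: ht_lam IH.
Qed.

Lemma has_type_nil G t A : has_type [::] t A -> has_type G t A.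
Proof. exact: has_type_weaken. Qed.

Lemma has_type_closed_at G t A : has_type G t A -> closed_at (size G) t.
Proof.
elim=> {G t A} [G n A|G u v A B _ closed_u _ closed_v|//] /=; last by rewrite closed_u.
by elim: G n => [|B G IH] [|n] //= /IH.
Qed.

Fixpoint subst_base r A := if A is Arr B C then Arr (subst_base r B) (subst_base r C) else r.

Lemma subst_base_arrows r As B :
  subst_base r (arrows As B) = arrows (map (subst_base r) As) (subst_base r B).
Proof. by elim: As => //= A As ->. Qed.

Lemma has_type_subst_base r G t A :
  has_type G t A -> has_type (map (subst_base r) G) t (subst_base r A).
Proof.
elim=> {G t A} [G n A lookup_n|G u v A B _ IHu _ IHv|G u A B _ IH].
- by apply: ht_var; elim: G n lookup_n => [|B G IH] [|n] //= => [[->]|/IH].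
- exact: ht_app IHu IHv.
- exact: ht_lam IH.
Qed.

Lemma has_type_apps G h us As B : has_type G h (arrows As B) ->
  List.Forall2 (has_type G) us As -> has_type G (apps h us) B.
Proof.
move=> h_typed us_typed; elim: us_typed h h_typed => //= u A us' As' u_typed _ IH h h_typed.
by rewrite apps_cons; apply: IH; apply: ht_app h_typed u_typed.
Qed.

Lemma has_type_lams n G b C :
  has_type (nseq n TO ++ G) b C -> has_type G (lams n b) (arrows (nseq n TO) C).
Proof.
elim: n G => [|n IH] G b_typed //=; apply/ht_lam/IH.
by move: b_typed; rewrite !cat_nseq /ncons iterSr.
Qed.

Ltac typecheck := match goal with
  | |- has_type _ (Lam _) _ => eapply ht_lam; typecheck
  | |- has_type _ (Var _) _ => eapply ht_var; reflexivity
  | |- has_type _ (App _ _) _ => eapply ht_app; [typecheck | typecheck]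
  | _ => idtac
  end.

Lemma church_typing n A : has_type [::] (church n) (omega A).
Proof.
do 2 apply: ht_lam.
by elim: n => [|n IH]; [apply: ht_var | apply: ht_app IH; apply: ht_var].
Qed.

Lemma succ_typing A : has_type [::] succ_tm (Arr (omega A) (omega A)).
Proof. by rewrite /succ_tm /omega; typecheck. Qed.

Lemma map_succ_typing Us R :
  has_type [::] (map_succ (size Us)) (Arr (arrows (map omega Us) R) (arrows (map omega Us) R)).
Proof.
elim: Us => [|U Us IH] /=; typecheck.
  by apply: has_type_nil; apply: IH.
by apply: has_type_nil; apply: succ_typing.
Qed.

Lemma discard_typing A Us : has_type [::] (discard (size Us)) (Arr A (arrows Us A)).
Proof. by elim: Us => [|U Us IH] /=; typecheck; apply: has_type_nil. Qed.

Lemma proj_typing Us i R : i < size Us ->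
  has_type [::] (proj (size Us) i) (Arr (Arr (nth TO Us i) R) (arrows Us R)).
Proof.
elim: i Us => [|i IH] [|U Us] //= lt_i; typecheck; apply: has_type_nil.
  exact: discard_typing.
exact: IH.
Qed.

Definition cps_ty Ts R := Arr (arrows (map omega Ts) R) R.

Lemma zero_tuple_typing Ts R : has_type [::] (zero_tuple (size Ts)) (cps_ty Ts R).
Proof.
apply/ht_lam/has_type_apps; first exact: ht_var.
elim: Ts [:: _] => [|T Ts IH] G; constructor => //.
by apply: has_type_nil; apply: church_typing.
Qed.

Lemma tuple_succ_typing Ts R :
  has_type [::] (tuple_succ (size Ts)) (Arr (cps_ty Ts R) (cps_ty Ts R)).
Proof.
by rewrite /tuple_succ /cps_ty; typecheck; apply: has_type_nil; apply: map_succ_typing.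
Qed.

Lemma coord_typing Ts R i : i < size Ts -> has_type [::] (coord (size Ts) i)
  (Arr (omega (cps_ty Ts R)) (Arr (Arr (omega (nth TO Ts i)) R) R)).
Proof.
move=> lt_i; rewrite /coord /omega; typecheck; apply: has_type_nil.
- exact: tuple_succ_typing.
- exact: zero_tuple_typing.
- have := @proj_typing (map omega Ts) i R; rewrite size_map (nth_map TO) //; exact.
Qed.

Lemma cps_bind_typing m N X R : has_type [::] (cps_bind m)
  (Arr (Arr N (arrows (nseq m X) R)) (Arr (Arr (Arr N R) R) (arrows (nseq m X) R))).
Proof. by elim: m => [|m IH] /=; typecheck; apply: has_type_nil. Qed.

Lemma postcompose_typing Us A B :
  has_type [::] (postcompose (size Us)) (Arr (Arr A B) (Arr (arrows Us A) (arrows Us B))).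
Proof. by elim: Us => [|U Us IH] /=; typecheck; apply: has_type_nil. Qed.

Definition sel_ty a A := arrows (nseq a A) A.

Lemma rotate_typing n A : has_type [::] (rotate n) (Arr (sel_ty n.+1 A) (sel_ty n.+1 A)).
Proof. by rewrite /sel_ty; elim: n => [|n IH] /=; typecheck; apply: has_type_nil. Qed.

Fixpoint dummy z A := if A is Arr _ B then Lam (dummy z B) else z.

Lemma dummy_typing z r A : has_type [::] z r -> has_type [::] (dummy z A) (subst_base r A).
Proof. by move=> z_typed; elim: A => //= A _ B IH; apply/ht_lam/has_type_nil. Qed.

Lemma closed_dummy z A : closed z -> closed (dummy z A).
Proof. by move=> closed_z; elim: A => //= A _ B; apply: closedW. Qed.

Fixpoint ty_args A := if A is Arr B C then B :: ty_args C else [::].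

Lemma arrows_ty_args A : arrows (ty_args A) TO = A.
Proof. by elim: A => //= A _ B ->. Qed.

Definition dummies n sg := map (dummy (discard n)) (ty_args sg).

Lemma closed_dummies n sg : all closed (dummies n sg).
Proof.
by rewrite /dummies; elim: (ty_args sg) => //= A As ->; rewrite closed_dummy ?closed_discard.
Qed.

Lemma numeral_to_sel_typing n sg : has_type [::] (numeral_to_sel n (dummies n sg))
  (Arr (omega (subst_base (sel_ty n.+1 TO) sg)) (sel_ty n.+1 TO)).
Proof.
set r := sel_ty n.+1 TO; set As := map (subst_base r) (ty_args sg).
have r_typed : has_type [::] (discard n) r.
  by have := @discard_typing TO (nseq n TO); rewrite size_nseq.
have -> : subst_base r sg = arrows As r by rewrite -{1}(arrows_ty_args sg) subst_base_arrows.
rewrite /numeral_to_sel /omega /dummies size_map; apply/ht_lam/has_type_apps.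
- typecheck; apply: has_type_nil.
  + by have := postcompose_typing As r r; rewrite size_map; apply.
  + exact: rotate_typing.
  + by have := @discard_typing r As; rewrite size_map; apply.
  + exact: r_typed.
- rewrite /As; elim: (ty_args sg) [:: _] => [|A As' IH] G; constructor => //.
  by apply: has_type_nil; apply: dummy_typing.
Qed.

Lemma convert_args_typing Ts sg R s i n : has_type [::] s (Arr (omega sg) R) -> i + n = size Ts ->
  has_type [::] (convert_args (size Ts) s i n)
    (Arr (arrows (map omega (drop i Ts)) (omega sg)) (arrows (nseq n (omega (cps_ty Ts R))) R)).
Proof.
move=> s_typed; elim: n i => [|n IH] i /= size_Ts.
  by rewrite drop_oversize // -size_Ts addn0.
have lt_i : i < size Ts by lia.
rewrite (drop_nth TO lt_i) /=; typecheck; apply: has_type_nil.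
- exact: cps_bind_typing.
- by apply: IH; rewrite addSnnS.
- exact: coord_typing.
Qed.

Lemma lookup_nseq_cat_lt n A G i : i < n -> lookup (nseq n A ++ G) i = Some A.
Proof. by elim: n i => [|n IH] [|i] //= /IH. Qed.

Lemma lookup_nseq_cat_add n A G i : lookup (nseq n A ++ G) (n + i) = lookup G i.
Proof. by elim: n. Qed.

Lemma bvars_typing m n G : n <= m ->
  List.Forall2 (has_type (nseq m TO ++ G)) (bvars n) (nseq n TO).
Proof.
elim: n => //= n IH lt_nm; constructor; last by apply: IH; apply: ltnW.
exact/ht_var/lookup_nseq_cat_lt.
Qed.

Lemma mkseq_typing G f a A : (forall j, j < a -> has_type G (f j) A) ->
  List.Forall2 (has_type G) (mkseq f a) (nseq a A).
Proof.
move=> f_typed; rewrite /mkseq -[a in nseq a _](size_iota 0 a).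
have : {subset iota 0 a <= gtn a} by move=> j; rewrite mem_iota.
by elim: (iota 0 a) => //= j js IH /allP /= /andP[lt_ja /allP/IH]; constructor; [apply: f_typed|].
Qed.

Lemma sel_to_church_typing a B :
  has_type [::] (sel_to_church a) (Arr (sel_ty a TO) (omega (Arr B (sel_ty a TO)))).
Proof.
set S := sel_ty a TO; rewrite /sel_to_church /omega; do 4 apply: ht_lam.
apply/has_type_lams/has_type_apps; first by apply: ht_var; rewrite (lookup_nseq_cat_add a _ _ 3).
apply: mkseq_typing => j _; apply: has_type_apps; last exact: bvars_typing.
apply: (ht_app (A := B)); last by apply: ht_var; rewrite -{2}[a]addn0 lookup_nseq_cat_add.
elim: j => [|j IH] /=; first by apply: ht_var; rewrite (lookup_nseq_cat_add a _ _ 1).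
by apply: ht_app IH; apply: ht_var; rewrite (lookup_nseq_cat_add a _ _ 2).
Qed.

Lemma numeral_type_omega A : numeral_type A -> exists T, A = omega T.
Proof.
move/(_ 2); rewrite /church /= => typed.
inversion_clear typed as [| |? ? F ? typed_f].
inversion_clear typed_f as [| |? ? X ? typed_x].
inversion_clear typed_x as [|? ? ? Y ? typed_ff typed_fx|].
inversion_clear typed_ff as [? ? ? lookup_f| |].
inversion_clear typed_fx as [|? ? ? Z ? typed_f' typed_x'|].
inversion_clear typed_f' as [? ? ? lookup_f'| |].
inversion_clear typed_x' as [? ? ? lookup_x| |].
move: lookup_f lookup_f' lookup_x => /= [->] [-> ->] [->].
by exists Z.
Qed.

Lemma numeral_types_omega As : (forall i, i < size As -> numeral_type (nth TO As i)) ->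
  exists Ts, As = map omega Ts.
Proof.
elim: As => [|A As IH] num_As; first by exists [::].
have [T ->] : exists T, A = omega T := numeral_type_omega (num_As 0 erefl).
have [Ts ->] := IH (fun i => num_As i.+1).
by exists (T :: Ts).
Qed.

Lemma strict_term_typing n sg Ts E (r := sel_ty n.+1 TO) (T := cps_ty Ts r) :
  has_type [::] E (arrows (map omega Ts) (omega (subst_base r sg))) ->
  has_type [::] (strict_term (size Ts) n (dummies n sg) E)
    (arrows (nseq (size Ts) (omega T)) (omega T)).
Proof.
move=> E_typed; apply: (ht_app (A := arrows (nseq (size Ts) (omega T)) r)).
  apply: (ht_app (A := Arr r (omega T))); last exact: sel_to_church_typing.
  by have := postcompose_typing (nseq (size Ts) (omega T)) r (omega T); rewrite size_nseq.
apply: ht_app E_typed.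
by have := convert_args_typing (numeral_to_sel_typing n sg) (erefl (0 + size Ts)); rewrite drop0.
Qed.

Lemma strictly_representable_bounded k (f : k.-tuple nat -> nat) E Ts sg n :
  size Ts = k -> has_type [::] E (arrows (map omega Ts) (omega sg)) ->
  (forall x : k.-tuple nat, betaeta (apps E (map church x)) (church (f x))) ->
  (forall x, f x <= n) -> strictly_representable f.
Proof.
move=> size_Ts E_typed E_rep f_le_n; pose r := sel_ty n.+1 TO; pose Ts' := map (subst_base r) Ts.
have size_Ts' : size Ts' = k by rewrite size_map.
exists (strict_term k n (dummies n sg) E), (cps_ty Ts' r); split.
  rewrite -size_Ts'; apply: strict_term_typing.
  move: (has_type_subst_base r E_typed); rewrite subst_base_arrows /Ts' -!map_comp.
  by congr (has_type _ _ (arrows _ _)); apply: eq_map.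
move=> x; apply: strict_term_red; rewrite ?size_tuple ?closed_dummies //.
exact: has_type_closed_at E_typed.
Qed.

Theorem theorem4 (k : nat) (f : k.-tuple nat -> nat) :
  skewly_representable f -> finite_range f -> strictly_representable f.
Proof.
case=> E [al [b [num_al [num_b [E_typed E_rep]]]]] [s f_in_s].
have [Ts al_omega] : exists Ts, val al = map omega Ts.
  apply: numeral_types_omega => i; rewrite size_tuple => lt_ik.
  by have := num_al (Ordinal lt_ik); rewrite (tnth_nth TO).
have [sg b_omega] := numeral_type_omega num_b.
have size_Ts : size Ts = k by rewrite -(size_map omega) -al_omega size_tuple.
rewrite al_omega b_omega in E_typed.
apply: (strictly_representable_bounded size_Ts E_typed E_rep (n := \max_(m <- s) m)) => x.
exact: leq_bigmax_seq.
Qed.
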